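(* Let $(\Theta,\mathcal H,\mathbb Q)$ be a probability space, let $g\in\mathcal H$ with $\mathbb Q(g)>0$, and let $\mathcal A$ and $\mathcal B$ be two $\mathbb Q$-independent sub-$\sigma$-fields of $\mathcal H$. Suppose that $\mathbb Q$-a.s. $\mathbb 1_g=AB$ for some $\mathcal A$-measurable $A:\Theta\to[0,\infty]$ and some $\mathcal B$-measurable $B:\Theta\to[0,\infty]$. Then there exist $a\in\mathcal A$ and $b\in\mathcal B$ such that $\mathbb Q$-a.s. $g=a\cap b$, and such $a$, $b$ are $\mathbb Q$-a.s. unique. *)

From HB Require Import structures.
From mathcomp Require Import all_boot all_order all_algebra.
From mathcomp Require Import all_classical all_reals all_analysis.
From mathcomp Require Import measurable_realfun.
Set Implicit Arguments. Unset Strict Implicit. Unset Printing Implicit Defensive.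
Import Order.TTheory GRing.Theory Num.Theory.
Local Open Scope classical_set_scope.
Local Open Scope ring_scope.

Definition sub_sigma_field d (T : measurableType d) (G : set (set T)) : Prop :=
  sigma_algebra setT G /\ G `<=` measurable.

Definition indep_sigma d (T : measurableType d) (R : realType)
  (Q : probability T R) (G1 G2 : set (set T)) : Prop :=
  forall a b, G1 a -> G2 b -> Q (a `&` b) = (Q a * Q b)%E.

Definition measurable_wrt d (T : measurableType d) (R : realType)
  (G : set (set T)) (f : T -> \bar R) : Prop :=
  forall Y : set (\bar R), measurable Y -> G (f @^-1` Y).

From HB Require Import structures.
From mathcomp Require Import all_boot all_order all_algebra.
From mathcomp Require Import all_classical all_reals all_analysis.
From mathcomp Require Import measurable_realfun.
Set Implicit Arguments. Unset Strict Implicit. Unset Printing Implicit Defensive.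
Import Order.TTheory GRing.Theory Num.Theory.
Local Open Scope classical_set_scope.
Local Open Scope ring_scope.

(* Existence: take a = {A > 0} and b = {B > 0}; since A, B >= 0, the product
   A B is positive exactly on a `&` b, and 1_g = A B a.s. says this is g a.s.
   Uniqueness: if g = a `&` b = a' `&` b' a.s., then (a `\` a') `&` b is null,
   so by independence Q (a `\` a') * Q b = 0; and Q b > 0 because
   Q a * Q b = Q g > 0.  Hence a = a' a.s., and symmetrically b = b' a.s. *)

Lemma sigma_algebraD (T : Type) (G : set (set T)) (a c : set T) :
  sigma_algebra setT G -> G a -> G c -> G (a `\` c).
Proof.
rewrite /sigma_algebra => -[G0 GC GU] Ga Gc.
have : G (setT `\` (\bigcup_i bigcup2 (setT `\` a) c i)).
  by apply: (GC); apply: (GU) => -[|[|n]] //=; exact: (GC).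
by rewrite bigcup2E !setTD setCU setCK -setDE.
Qed.

Lemma indic_gt0 (T : Type) (R : numDomainType) (g : set T) (x : T) :
  (0 < \1_g x :> R) <-> g x.
Proof.
rewrite indicE; case: (pselect (g x)) => gx; first by rewrite mem_set.
by rewrite memNset // ltxx.
Qed.

Lemma measurable_wrt_gt0 d (T : measurableType d) (R : realType)
    (G : set (set T)) (f : T -> \bar R) :
  measurable_wrt G f -> G [set x | (0 < f x)%E].
Proof.
move=> mf; have -> : [set x | (0 < f x)%E] = f @^-1` `]0%E, +oo%E].
  by apply/seteqP; split => x /=; rewrite in_itv /= leey andbT.
by apply: mf; exact: emeasurable_itv.
Qed.

Section ae_eqset.
Context d (T : measurableType d) (R : realType) (mu : {measure set T -> \bar R}).

Lemma ae_eqsetP (a b : set T) : measurable a -> measurable b ->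
  {ae mu, forall x, a x <-> b x} <-> mu (a `\` b) = 0 /\ mu (b `\` a) = 0.
Proof.
move=> ma mb; split => [ab|[ab0 ba0]].
  by split; apply: measure_negligible (measurableD _ _) _ => //;
    apply: negligibleS ab => x [ax nbx] /= h; apply: nbx; apply/h.
have : mu.-negligible ((a `\` b) `|` (b `\` a)).
  by apply: negligibleU; apply/negligibleP => //; exact: measurableD.
apply: negligibleS => x /= nab.
by case: (pselect (a x)) => ax; case: (pselect (b x)) => bx; tauto.
Qed.

Lemma ae_eqset_measure (a b : set T) : measurable a -> measurable b ->
  {ae mu, forall x, a x <-> b x} -> mu a = mu b.
Proof.
move=> ma mb /(ae_eqsetP ma mb)[ab0 ba0].
rewrite (measureDI mu ma mb) (measureDI mu mb ma) setIC.
by congr (_ + _)%E; exact: etrans ab0 (esym ba0).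
Qed.

End ae_eqset.

Section independent_sigma_fields.
Context d (T : measurableType d) (R : realType) (Q : probability T R).

Lemma indep_sigmaC (G1 G2 : set (set T)) :
  indep_sigma Q G1 G2 -> indep_sigma Q G2 G1.
Proof. by move=> ind a b G2a G1b; rewrite setIC ind // muleC. Qed.

Lemma indep_setI_ae_setD0 (GA GB : set (set T)) (a b a' b' : set T) :
  sub_sigma_field GA -> sub_sigma_field GB -> indep_sigma Q GA GB ->
  GA a -> GB b -> GA a' -> GB b' -> (0 < Q (a `&` b))%E ->
  {ae Q, forall x, (a `&` b) x <-> (a' `&` b') x} -> Q (a `\` a') = 0.
Proof.
move=> sGA [_ mB] ind Ga Gb Ga' Gb' ab_gt0 ab_ab'.
have mA := sGA.2.
have mab : measurable (a `&` b) by apply: measurableI; [exact: mA|exact: mB].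
have mab' : measurable (a' `&` b') by apply: measurableI; [exact: mA|exact: mB].
have Gaa' : GA (a `\` a') by exact: sigma_algebraD sGA.1 Ga Ga'.
have Qb_neq0 : Q b != 0.
  by apply: contraTneq ab_gt0 => Qb0; rewrite ind // Qb0 mule0 ltxx.
have : Q ((a `\` a') `&` b) = 0.
  apply/eqP; rewrite -measure_le0 -((ae_eqsetP _ mab mab').1 ab_ab').1.
  apply: le_measure; rewrite ?inE.
  - by apply: measurableI; [exact: mA|exact: mB].
  - exact: measurableD.
  - by move=> x [[ax na'x] bx]; split=> // -[].
by rewrite ind // => /eqP; rewrite mule_eq0 (negPf Qb_neq0) orbF => /eqP.
Qed.

Lemma indep_setI_ae_unique (GA GB : set (set T)) (g a b a' b' : set T) :
  sub_sigma_field GA -> sub_sigma_field GB -> indep_sigma Q GA GB ->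
  measurable g -> (0 < Q g)%E -> GA a -> GB b -> GA a' -> GB b' ->
  {ae Q, forall x, g x <-> (a `&` b) x} ->
  {ae Q, forall x, g x <-> (a' `&` b') x} ->
  {ae Q, forall x, a x <-> a' x} /\ {ae Q, forall x, b x <-> b' x}.
Proof.
move=> sGA sGB ind mg Qg_gt0 Ga Gb Ga' Gb' g_ab g_ab'.
have [[_ mA] [_ mB]] := (sGA, sGB).
have mab : measurable (a `&` b) by apply: measurableI; [exact: mA|exact: mB].
have mab' : measurable (a' `&` b') by apply: measurableI; [exact: mA|exact: mB].
have ab_ab' : {ae Q, forall x, (a `&` b) x <-> (a' `&` b') x}.
  by apply: filterS (filterI g_ab g_ab') => x [h h']; rewrite -h -h'.
have ab'_ab : {ae Q, forall x, (a' `&` b') x <-> (a `&` b) x}.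
  by apply: filterS ab_ab' => x; exact: iff_sym.
have ab_gt0 : (0 < Q (a `&` b))%E by rewrite -(ae_eqset_measure mg mab g_ab).
have ab'_gt0 : (0 < Q (a' `&` b'))%E by rewrite -(ae_eqset_measure mg mab' g_ab').
have indC := indep_sigmaC ind.
split.
  apply/(ae_eqsetP Q (mA _ Ga) (mA _ Ga')); split.
    exact: (indep_setI_ae_setD0 sGA sGB ind Ga Gb Ga' Gb').
  exact: (indep_setI_ae_setD0 sGA sGB ind Ga' Gb' Ga Gb).
apply/(ae_eqsetP Q (mB _ Gb) (mB _ Gb')).
rewrite setIC (setIC a') in ab_gt0 ab'_gt0 ab_ab' ab'_ab; split.
  exact: (indep_setI_ae_setD0 sGB sGA indC Gb Ga Gb' Ga').
exact: (indep_setI_ae_setD0 sGB sGA indC Gb' Ga' Gb Ga).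
Qed.

End independent_sigma_fields.

Theorem lemma2p1 (d : measure_display) (Theta : measurableType d) (R : realType)
  (Q : probability Theta R) (g : set Theta) (GA GB : set (set Theta))
  (A B : Theta -> \bar R) :
  measurable g -> (0 < Q g)%E ->
  sub_sigma_field GA -> sub_sigma_field GB -> indep_sigma Q GA GB ->
  measurable_wrt GA A -> (forall x, (0 <= A x)%E) ->
  measurable_wrt GB B -> (forall x, (0 <= B x)%E) ->
  {ae Q, forall x, ((\1_g x)%:E = A x * B x)%E} ->
  exists a b, [/\ GA a, GB b,
    {ae Q, forall x, g x <-> (a `&` b) x} &
    forall a' b', GA a' -> GB b' ->
      {ae Q, forall x, g x <-> (a' `&` b') x} ->
      {ae Q, forall x, a x <-> a' x} /\ {ae Q, forall x, b x <-> b' x}].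
Proof.
move=> mg Qg_gt0 sGA sGB ind mA A_ge0 mB B_ge0 g_AB.
exists [set x | (0 < A x)%E], [set x | (0 < B x)%E].
have Ga := measurable_wrt_gt0 mA; have Gb := measurable_wrt_gt0 mB.
have g_ab : {ae Q, forall x, g x <-> (0 < A x)%E /\ (0 < B x)%E}.
  apply: filterS g_AB => x AB_x.
  have : (0 < A x * B x)%E <-> g x by rewrite -AB_x lte_fin; exact: indic_gt0.
  by rewrite mule_ge0_gt0 // => AB_gt0; split => [/AB_gt0/andP|/andP/AB_gt0].
split=> // a' b' Ga' Gb'.
exact: (indep_setI_ae_unique sGA sGB ind mg Qg_gt0 Ga Gb Ga' Gb' g_ab).
Qed.
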